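(* Let $A=(a_{ij})\in\mathbb{R}_{\max}^{2\times 2}$ with $\lambda(A)\ne-\infty$ and $g(\mathrm{crit}(A))=2$. Then $T_1(A)=\mathrm{DM}(2,2)=2$ if and only if $a_{11}\ne a_{22}$.
   Context: Max-plus semiring $\mathbb{R}_{\max}=\mathbb{R}\cup\{-\infty\}$ with $a\oplus b=\max(a,b)$, $a\otimes b=a+b$; $(AB)_{ij}=\max_k(a_{ik}+b_{kj})$; $A^t$ is the $t$-th max-plus power, $A^0=I$. $\mathcal{D}(A)$ is the digraph with arc $(i,j)$ of weight $a_{ij}$ whenever $a_{ij}\ne-\infty$; cycles, their length and weight as usual. $\lambda(A)$ is the maximal cycle mean. $\mathrm{crit}(A)$ is the subgraph of all nodes and arcs of cycles attaining $\lambda(A)$; its nodes are critical. $g(\mathrm{crit}(A))$ is the maximum over strongly connected components of $\mathrm{crit}(A)$ of their minimal cycle length. The cyclicity of $\mathrm{crit}(A)$ is the lcm over components of the gcd of their cycle lengths. CSR terms: with $\lambda=\lambda(A)$, $\gamma$ the cyclicity of $\mathrm{crit}(A)$, $A_\lambda$ equal to $A$ with $\lambda$ subtracted from every finite entry, $M=I\oplus N\oplus\dots\oplus N^{n-1}$ where $N=A_\lambda^\gamma$: $c_{ij}=m_{ij}$ if $j$ critical, else $-\infty$; $r_{ij}=m_{ij}$ if $i$ critical, else $-\infty$; $s_{ij}=a_{ij}$ if $(i,j)$ is an arc of $\mathrm{crit}(A)$, else $-\infty$; $CS^tR[A]$ is the product $CS^tR$. $B_N$ has $(B_N)_{ij}=-\infty$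 if $i$ or $j$ is critical and $a_{ij}$ otherwise. $T_1(A)$ is the least $T\ge0$ with $A^t=CS^tR[A]\oplus B_N^t$ for all $t\ge T$. $\mathrm{DM}(g,n)=g(n-2)+n$. *)

(* Max-plus semiring R_max = R ∪ {-oo} modelled as option R
   (None = -oo), over an arbitrary real field R (the paper uses the reals). *)
From HB Require Import structures.
From mathcomp Require Import all_boot all_order all_algebra.
Set Implicit Arguments. Unset Strict Implicit. Unset Printing Implicit Defensive.
Import Order.TTheory GRing.Theory Num.Theory.
Local Open Scope ring_scope.

Section MaxPlus.
Variable R : realFieldType.

Definition mp := option R.

Definition mpadd (a b : mp) : mp :=
  match a, b with
  | Some x, Some y => Some (Num.max x y)
  | Some x, None => Some x
  | None, b => b
  end.

Definition mpmul (a b : mp) : mp :=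
  match a, b with
  | Some x, Some y => Some (x + y)
  | _, _ => None
  end.

Definition mpmx (n : nat) := 'I_n -> 'I_n -> mp.

Definition mpI n : mpmx n := fun i j => if i == j then Some 0 else None.

Definition mpmxadd n (A B : mpmx n) : mpmx n := fun i j => mpadd (A i j) (B i j).

Definition mpmxmul n (A B : mpmx n) : mpmx n :=
  fun i j => \big[mpadd/None]_(k < n) mpmul (A i k) (B k j).

Definition mpmxpow n (A : mpmx n) (t : nat) : mpmx n := iter t (mpmxmul A) (@mpI n).

(* Cycles of D(A): elementary cycles i_0 -> i_1 -> ... -> i_k -> i_0,
   given as a uniq (k+1)-tuple of nodes; arc m goes from c_m to c_(m+1 mod k+1). *)
Definition cycle_weight n (A : mpmx n) k (c : (k.+1).-tuple 'I_n) : mp :=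
  \big[mpmul/Some 0]_(m < k.+1) A (tnth c m) (tnth c (ordS m)).

(* cycle mean; None when c is not a cycle of D(A) (some arc is -oo) *)
Definition cycle_mean n (A : mpmx n) k (c : (k.+1).-tuple 'I_n) : mp :=
  match cycle_weight A c with
  | Some w => Some (w / (k.+1)%:R)
  | None => None
  end.

Definition is_cycle n (A : mpmx n) k (c : (k.+1).-tuple 'I_n) : bool :=
  uniq c && (cycle_weight A c != None).

(* maximal cycle mean lambda(A) (= -oo if D(A) is acyclic) *)
Definition mcm n (A : mpmx n) : mp :=
  \big[mpadd/None]_(k < n)
    \big[mpadd/None]_(c : (k.+1).-tuple 'I_n | uniq c) cycle_mean A c.

Definition critical_cycle n (A : mpmx n) k (c : (k.+1).-tuple 'I_n) : bool :=
  is_cycle A c && (cycle_mean A c == mcm A).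

Definition crit_arc n (A : mpmx n) (i j : 'I_n) : bool :=
  [exists k : 'I_n, [exists c : (k.+1).-tuple 'I_n,
     critical_cycle A c && [exists m : 'I_k.+1, (tnth c m == i) && (tnth c (ordS m) == j)]]].

Definition crit_node n (A : mpmx n) (i : 'I_n) : bool :=
  [exists k : 'I_n, [exists c : (k.+1).-tuple 'I_n,
     critical_cycle A c && (i \in c)]].

Definition crit_scc n (A : mpmx n) (i j : 'I_n) : bool :=
  [&& crit_node A i, crit_node A j, connect (crit_arc A) i j & connect (crit_arc A) j i].

Definition crit_graph_cycle n (A : mpmx n) k (c : (k.+1).-tuple 'I_n) : bool :=
  uniq c && [forall m : 'I_k.+1, crit_arc A (tnth c m) (tnth c (ordS m))].

Definition comp_has_cycle_len n (A : mpmx n) (i : 'I_n) (k : 'I_n) : bool :=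
  [exists c : (k.+1).-tuple 'I_n,
     crit_graph_cycle A c && [exists m : 'I_k.+1, crit_scc A i (tnth c m)]].

(* minimal cycle length of the component of i (the default n.+1 is never
   reached for critical i) *)
Definition comp_girth n (A : mpmx n) (i : 'I_n) : nat :=
  \big[minn/n.+1]_(k < n | comp_has_cycle_len A i k) k.+1.

Definition comp_cyclicity n (A : mpmx n) (i : 'I_n) : nat :=
  \big[gcdn/0]_(k < n | comp_has_cycle_len A i k) k.+1.

Definition crit_girth n (A : mpmx n) : nat :=
  \max_(i < n | crit_node A i) comp_girth A i.

Definition crit_cyclicity n (A : mpmx n) : nat :=
  \big[lcmn/1]_(i < n | crit_node A i) comp_cyclicity A i.

Definition mp_normalize n (A : mpmx n) : mpmx n :=
  fun i j => match A i j, mcm A with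
             | Some x, Some l => Some (x - l)
             | a, _ => a
             end.

Definition csr_N n (A : mpmx n) : mpmx n :=
  mpmxpow (mp_normalize A) (crit_cyclicity A).

Definition csr_M n (A : mpmx n) : mpmx n :=
  fun i j => \big[mpadd/None]_(k < n) mpmxpow (csr_N A) k i j.

Definition csr_C n (A : mpmx n) : mpmx n :=
  fun i j => if crit_node A j then csr_M A i j else None.

Definition csr_R n (A : mpmx n) : mpmx n :=
  fun i j => if crit_node A i then csr_M A i j else None.

Definition csr_S n (A : mpmx n) : mpmx n :=
  fun i j => if crit_arc A i j then A i j else None.

Definition CSR n (A : mpmx n) (t : nat) : mpmx n :=
  mpmxmul (mpmxmul (csr_C A) (mpmxpow (csr_S A) t)) (csr_R A).

Definition csr_B n (A : mpmx n) : mpmx n :=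
  fun i j => if crit_node A i || crit_node A j then None else A i j.

Definition csr_holds_at n (A : mpmx n) (t : nat) : Prop :=
  mpmxpow A t = mpmxadd (CSR A t) (mpmxpow (csr_B A) t).

Definition is_T1 n (A : mpmx n) (T : nat) : Prop :=
  (forall t, (T <= t)%N -> csr_holds_at A t) /\
  (forall T', (forall t, (T' <= t)%N -> csr_holds_at A t) -> (T <= T')%N).

End MaxPlus.

Definition DM (g n : nat) : nat := (g * (n - 2) + n)%N.

From HB Require Import structures.
From mathcomp Require Import all_boot all_order all_algebra.
From mathcomp Require Import lra.
From Stdlib Require Import FunctionalExtensionality.
Set Implicit Arguments. Unset Strict Implicit. Unset Printing Implicit Defensive.
Import Order.TTheory GRing.Theory Num.Theory.
Local Open Scope ring_scope.

(* Since crit(A) has girth 2 on two nodes, it consists exactly of the 2-cycle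
   1 -> 2 -> 1, so a12 + a21 = 2 lambda, both nodes are critical (B_N is empty),
   the cyclicity is 2, and the loops satisfy a11, a22 <= lambda.  Then A^t for
   t >= 2 and CS^tR[A] for t >= 1 are computed in closed form: they agree for
   t >= 2, while at t = 1 the CSR term has both diagonal entries a11 (+) a22.
   So the decomposition holds at t = 1 iff a11 = a22, and T_1(A) = 2 iff
   a11 <> a22. *)

Section MaxPlusScalars.
Variable R : realFieldType.
Implicit Types x : mp R.

Lemma mpaddA : associative (@mpadd R).
Proof. by case=> [x|] [y|] [z|] //=; rewrite maxA. Qed.

Lemma mpaddC : commutative (@mpadd R).
Proof. by case=> [x|] [y|] //=; rewrite maxC. Qed.

Lemma mpadd_minfl : left_id None (@mpadd R).
Proof. by case. Qed.

Lemma mpadd_minfr : right_id None (@mpadd R).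
Proof. by case. Qed.

Lemma mpaddxx x : mpadd x x = x.
Proof. by case: x => //= x; rewrite maxxx. Qed.

Lemma mpmulC : commutative (@mpmul R).
Proof. by case=> [x|] [y|] //=; rewrite addrC. Qed.

Lemma mpmul1r : right_id (Some 0) (@mpmul R).
Proof. by case=> //= x; rewrite addr0. Qed.

Lemma mpmul_minfr : right_zero None (@mpmul R).
Proof. by case. Qed.

Definition mp_le x (l : R) : bool := if x is Some v then v <= l else true.

End MaxPlusScalars.

HB.instance Definition _ (R : realFieldType) :=
  Monoid.isComLaw.Build (mp R) None (@mpadd R) (@mpaddA R) (@mpaddC R) (@mpadd_minfl R).

Lemma big_ord2_cond (T : Type) (idx : T) (op : T -> T -> T) (P : pred 'I_2) F :
  \big[op/idx]_(i < 2 | P i) F i =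
  (if P ord0 then op (F ord0) else id) ((if P ord_max then op (F ord_max) else id) idx).
Proof.
have -> : index_enum 'I_2 = [:: ord0; ord_max].
  by apply: (inj_map val_inj); rewrite /index_enum -enumT /= val_enum_ord.
by rewrite !big_cons big_nil; case: (P ord0); case: (P ord_max).
Qed.

Lemma ord2P (i : 'I_2) : i = ord0 \/ i = ord_max.
Proof. by case: i => [[|[|]]] // Hi; [left|right]; apply: val_inj. Qed.

Lemma ordS2_0 : ordS (ord0 : 'I_2) = ord_max. Proof. exact: val_inj. Qed.
Lemma ordS2_1 : ordS (ord_max : 'I_2) = ord0. Proof. exact: val_inj. Qed.
Lemma ordS1 (m : 'I_1) : ordS m = m. Proof. by rewrite (ord1 m); apply: val_inj. Qed.

Section CycleMeans.
Variables (R : realFieldType) (n : nat) (A : mpmx R n).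

Lemma big_mpadd_absorb (I : finType) (P : pred I) (F : I -> mp R) i : P i ->
  mpadd (F i) (\big[@mpadd R/None]_(j | P j) F j) = \big[@mpadd R/None]_(j | P j) F j.
Proof. by move=> Pi; rewrite (bigD1 i) //= mpaddA mpaddxx. Qed.

Lemma cycle_mean_le_mcm (k : 'I_n) (c : (k.+1).-tuple 'I_n) m l :
  uniq c -> cycle_mean A c = Some m -> mcm A = Some l -> m <= l.
Proof.
move=> Uc Hm Hl.
have Hk := @big_mpadd_absorb _ xpredT (fun k : 'I_n =>
  \big[@mpadd R/None]_(c : (k.+1).-tuple 'I_n | uniq c) cycle_mean A c) k isT.
have Hc := @big_mpadd_absorb _ (fun c : (k.+1).-tuple 'I_n => uniq c) (@cycle_mean R n A k) c Uc.
have : mpadd (cycle_mean A c) (mcm A) = mcm A.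
  by rewrite /mcm -{1}Hk mpaddA Hc Hk.
by rewrite Hl Hm => -[/max_idPr].
Qed.

Lemma cycle_weight1 (c : 1.-tuple 'I_n) :
  cycle_weight A c = A (tnth c ord0) (tnth c ord0).
Proof. by rewrite /cycle_weight big_ord_recl big_ord0 ordS1 mpmul1r. Qed.

Lemma cycle_weight2 (c : 2.-tuple 'I_n) (m : 'I_2) :
  cycle_weight A c = mpmul (A (tnth c m) (tnth c (ordS m))) (A (tnth c (ordS m)) (tnth c m)).
Proof.
rewrite /cycle_weight big_ord_recl big_ord_recl big_ord0 mpmul1r.
have -> : lift ord0 ord0 = ord_max :> 'I_2 by exact: val_inj.
by case: (ord2P m) => ->; rewrite ?ordS2_0 ?ordS2_1 // mpmulC.
Qed.

Lemma crit_arc_nodes x y : crit_arc A x y -> crit_node A x && crit_node A y.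
Proof.
case/existsP => k /existsP [c /andP [Hcc /existsP [m /andP [/eqP Hx /eqP Hy]]]].
by apply/andP; split; apply/existsP; exists k; apply/existsP; exists c;
  rewrite Hcc /= -?Hx -?Hy mem_tnth.
Qed.

End CycleMeans.

Lemma loop_le_mcm (R : realFieldType) n (A : mpmx R n.+1) x v l :
  A x x = Some v -> mcm A = Some l -> v <= l.
Proof.
move=> Hv; apply: (@cycle_mean_le_mcm _ _ _ ord0 [tuple x]) => //.
by rewrite /cycle_mean cycle_weight1 /= Hv divr1.
Qed.

Section TwoByTwo.
Variable R : realFieldType.
Implicit Types (x y z w : mp R) (X : mpmx R 2).

Definition mpmx2 x y z w : mpmx R 2 :=
  fun i j => if i == ord0 then (if j == ord0 then x else y) else (if j == ord0 then z else w).

Lemma mpmx2E X : X = mpmx2 (X ord0 ord0) (X ord0 ord_max) (X ord_max ord0) (X ord_max ord_max).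
Proof.
apply: functional_extensionality => i; apply: functional_extensionality => j.
by case: (ord2P i) => ->; case: (ord2P j) => ->.
Qed.

Lemma mpmx2_mul x y z w (x' y' z' w' : mp R) :
  mpmxmul (mpmx2 x y z w) (mpmx2 x' y' z' w') =
  mpmx2 (mpadd (mpmul x x') (mpmul y z')) (mpadd (mpmul x y') (mpmul y w'))
        (mpadd (mpmul z x') (mpmul w z')) (mpadd (mpmul z y') (mpmul w w')).
Proof.
apply: functional_extensionality => i; apply: functional_extensionality => j.
rewrite /mpmxmul !big_ord_recl big_ord0 mpadd_minfr.
have -> : lift ord0 ord0 = ord_max :> 'I_2 by exact: val_inj.
by case: (ord2P i) => ->; case: (ord2P j) => ->.
Qed.

Lemma mpI2 : @mpI R 2 = mpmx2 (Some 0) None None (Some 0).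
Proof. by rewrite [LHS]mpmx2E. Qed.

Lemma mpmxmul1r X : mpmxmul X (@mpI R 2) = X.
Proof.
rewrite [X in mpmxmul X]mpmx2E mpI2 mpmx2_mul [RHS]mpmx2E.
by congr mpmx2; rewrite !mpmul1r !mpmul_minfr ?mpadd_minfl ?mpadd_minfr.
Qed.

Lemma mpmxpow1 X : mpmxpow X 1 = X.
Proof. exact: mpmxmul1r. Qed.

Lemma mpmxpow_minf t : mpmxpow (mpmx2 None None None None) t.+1 = mpmx2 None None None None.
Proof. by rewrite /mpmxpow iterS [X in mpmxmul _ X]mpmx2E mpmx2_mul. Qed.

Lemma mpmxadd_minfr X : mpmxadd X (mpmx2 None None None None) = X.
Proof.
apply: functional_extensionality => i; apply: functional_extensionality => j.
by rewrite /mpmxadd /mpmx2; case: ifP; case: ifP; rewrite mpadd_minfr.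
Qed.

End TwoByTwo.

Section CriticalGraph2.
Variables (R : realFieldType) (A : mpmx R 2).

Lemma crit_arc01_weights l : mcm A = Some l -> crit_arc A ord0 ord_max ->
  exists b c, [/\ A ord0 ord_max = Some b, A ord_max ord0 = Some c & b + c = l + l].
Proof.
move=> Hl /existsP [k /existsP [c /andP [Hcc /existsP [m /andP [/eqP Hx /eqP Hy]]]]].
move: c Hcc m Hx Hy; case: k => [[|[|//]] /= _] c Hcc m Hx Hy.
  by move: Hy; rewrite ordS1 Hx.
move: Hcc; rewrite /critical_cycle /is_cycle /cycle_mean Hl (cycle_weight2 _ _ m) Hx Hy.
case: (A ord0 ord_max) => [b|]; last by rewrite eqxx andbF.
case: (A ord_max ord0) => [c'|]; last by rewrite eqxx andbF.
by move=> /andP [_ /eqP [E]]; exists b, c'; split => //; lra.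
Qed.

Lemma crit_scc2 i j : crit_arc A ord0 ord_max -> crit_arc A ord_max ord0 -> crit_scc A i j.
Proof.
move=> H01 H10; have /andP [N0 N1] := crit_arc_nodes H01.
have Hn k : crit_node A k by case: (ord2P k) => ->.
have Hc k k' : connect (crit_arc A) k k'.
  by case: (ord2P k) => ->; case: (ord2P k') => ->; rewrite ?connect0 //; apply: connect1.
by rewrite /crit_scc !Hn !Hc.
Qed.

Lemma comp_has_cycle_len2_arcs i : comp_has_cycle_len A i ord_max ->
  crit_arc A ord0 ord_max && crit_arc A ord_max ord0.
Proof.
case/existsP => c /andP [/andP [Hu /forallP Ha] _].
move: Hu (Ha ord0) (Ha ord_max) => {Ha}; rewrite ordS2_0 ordS2_1.
case: c => [[|x [|y []]] //= Hs]; rewrite /tnth /= andbT inE.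
by case: (ord2P x) => ->; case: (ord2P y) => -> //= _ -> ->.
Qed.

Lemma comp_has_cycle_len2_loop i x : crit_arc A ord0 ord_max -> crit_arc A ord_max ord0 ->
  crit_arc A x x -> comp_has_cycle_len A i ord0.
Proof.
move=> H01 H10 Hxx; apply/existsP; exists [tuple x]; apply/andP; split.
  by apply/andP; split => //; apply/forallP => m; rewrite ordS1 (ord1 m).
by apply/existsP; exists ord0; apply: crit_scc2.
Qed.

Lemma comp_has_cycle_len2_full i : crit_arc A ord0 ord_max -> crit_arc A ord_max ord0 ->
  comp_has_cycle_len A i ord_max.
Proof.
move=> H01 H10; apply/existsP; exists [tuple ord0; ord_max]; apply/andP; split.
  apply/andP; split => //.
  by apply/forallP => m; case: (ord2P m) => ->; rewrite ?ordS2_0 ?ordS2_1.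
by apply/existsP; exists ord0; apply: crit_scc2.
Qed.

Lemma crit_girth2_2cycle : crit_girth A = 2%N ->
  [/\ crit_arc A ord0 ord_max, crit_arc A ord_max ord0 & forall x, ~~ crit_arc A x x].
Proof.
move=> Hg; have [i /and3P [_ Nloop Ncyc]] : exists i,
    [&& crit_node A i, ~~ comp_has_cycle_len A i ord0 & comp_has_cycle_len A i ord_max].
  move: Hg; rewrite /crit_girth /comp_girth !big_ord2_cond.
  case E0: (crit_node A ord0); case E1: (crit_node A ord_max);
  case F00: (comp_has_cycle_len A ord0 ord0); case F01: (comp_has_cycle_len A ord0 ord_max);
  case F10: (comp_has_cycle_len A ord_max ord0);
  case F11: (comp_has_cycle_len A ord_max ord_max) => //= _;
  first [by exists ord0; rewrite E0 F00 F01 | by exists ord_max; rewrite E1 F10 F11].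
have /andP [H01 H10] := comp_has_cycle_len2_arcs Ncyc.
split=> // x; apply/negP => /(comp_has_cycle_len2_loop i H01 H10).
exact/negP.
Qed.

Lemma crit_cyclicity2 : crit_arc A ord0 ord_max -> crit_arc A ord_max ord0 ->
  (forall x, ~~ crit_arc A x x) -> crit_cyclicity A = 2%N.
Proof.
move=> H01 H10 Hloop; have /andP [N0 N1] := crit_arc_nodes H01.
have Hl i : comp_has_cycle_len A i ord0 = false.
  apply/negbTE/negP => /existsP [c /andP [/andP [_ /forallP Ha] _]].
  by have := Ha ord0; rewrite ordS1 (negbTE (Hloop _)).
rewrite /crit_cyclicity /comp_cyclicity !big_ord2_cond N0 N1 !Hl.
by rewrite !comp_has_cycle_len2_full.
Qed.

End CriticalGraph2.

Ltac mp_split_max := repeat match goal with |- context [Order.max ?x ?y] =>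
  lazymatch x with context [Order.max _ _] => fail | _ =>
  lazymatch y with context [Order.max _ _] => fail | _ =>
  rewrite (maxEle x y); case: (leP x y) => ? /= end end end.

Ltac mp_entrywise a d Hbc Ha Hd :=
  congr mpmx2; move: Hbc Ha Hd; case: a => [?|]; case: d => [?|] => /= ? ? ?;
  mp_split_max; try done; congr Some; lra.

Section TwoCycleForms.
Variables (R : realFieldType) (a d : mp R) (b c l : R).
Hypotheses (Hbc : b + c = l + l) (Ha : mp_le a l) (Hd : mp_le d l).

(* Common value of A^t (t >= 2) and CS^tR[A] (t >= 1) for [o = odd t] and
   [e = t lambda]; [mpadd a d] is the heaviest loop. *)
Definition cyc_power (o : bool) (e : R) : mpmx R 2 :=
  if o then mpmx2 (mpmul (mpadd a d) (Some (e - l))) (Some (b + e - l)) (Some (c + e - l))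
                  (mpmul (mpadd a d) (Some (e - l)))
  else mpmx2 (Some e) (mpmul (mpadd a d) (Some (b + e - l - l)))
             (mpmul (mpadd a d) (Some (c + e - l - l))) (Some e).

Definition crit_power (o : bool) (e : R) : mpmx R 2 :=
  if o then mpmx2 None (Some (b + e - l)) (Some (c + e - l)) None
  else mpmx2 (Some e) None None (Some e).

Local Notation A2 := (mpmx2 a (Some b) (Some c) d).
Local Notation S2 := (mpmx2 None (Some b) (Some c) None).

Lemma cyc_power_mulA o e : mpmxmul A2 (cyc_power o e) = cyc_power (~~ o) (e + l).
Proof. by case: o; rewrite /cyc_power mpmx2_mul; mp_entrywise a d Hbc Ha Hd. Qed.

Lemma crit_power_mulS o e : mpmxmul S2 (crit_power o e) = crit_power (~~ o) (e + l).
Proof. by case: o; rewrite /crit_power mpmx2_mul; congr mpmx2 => //=; congr Some; move: Hbc; lra. Qed.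

Lemma cyc_power_sandwich o e :
  mpmxmul (mpmxmul (cyc_power false 0) (crit_power o e)) (cyc_power false 0) = cyc_power o e.
Proof. by case: o; rewrite /cyc_power /crit_power !mpmx2_mul; mp_entrywise a d Hbc Ha Hd. Qed.

Lemma mpmxpow2_A2 : mpmxpow A2 2 = cyc_power false (l + l).
Proof. by rewrite /mpmxpow /= mpmxmul1r /cyc_power mpmx2_mul; mp_entrywise a d Hbc Ha Hd. Qed.

Lemma mpmxpow2_normalized :
  mpmxpow (mpmx2 (mpmul a (Some (- l))) (Some (b - l)) (Some (c - l)) (mpmul d (Some (- l)))) 2
  = cyc_power false 0.
Proof. by rewrite /mpmxpow /= mpmxmul1r /cyc_power mpmx2_mul; mp_entrywise a d Hbc Ha Hd. Qed.

Lemma mpmxpow_A2 t : mpmxpow A2 t.+2 = cyc_power (odd t) (t.+2%:R * l).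
Proof.
elim: t => [|t IH]; first by rewrite mpmxpow2_A2 mulr_natl mulr2n.
by rewrite /mpmxpow iterS -/(mpmxpow _ _) IH cyc_power_mulA /= !mulr_natl [in RHS]mulrSr.
Qed.

Lemma mpmxpow_S2 t : mpmxpow S2 t = crit_power (odd t) (t%:R * l).
Proof.
elim: t => [|t IH]; first by rewrite /mpmxpow /= mpI2 /crit_power mul0r.
by rewrite /mpmxpow iterS -/(mpmxpow _ _) IH crit_power_mulS /= !mulr_natl [in RHS]mulrSr.
Qed.

End TwoCycleForms.

Section CSRTwoCycle.
Variables (R : realFieldType) (A : mpmx R 2) (l b c : R).
Hypotheses (Hl : mcm A = Some l) (Hb : A ord0 ord_max = Some b) (Hc : A ord_max ord0 = Some c)
  (Hbc : b + c = l + l) (H01 : crit_arc A ord0 ord_max) (H10 : crit_arc A ord_max ord0)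
  (Hloop : forall x, ~~ crit_arc A x x).

Local Notation a := (A ord0 ord0).
Local Notation d := (A ord_max ord_max).
Local Notation cyc := (cyc_power a d b c l).

Lemma diag_le_mcm x : mp_le (A x x) l.
Proof. by case Hx: (A x x) => [v|] //=; apply: loop_le_mcm Hx Hl. Qed.

Lemma mpmx2_A : A = mpmx2 a (Some b) (Some c) d.
Proof. by rewrite [LHS]mpmx2E Hb Hc. Qed.

Lemma crit_node2 x : crit_node A x.
Proof. by have /andP [N0 N1] := crit_arc_nodes H01; case: (ord2P x) => ->. Qed.

Lemma csr_S2 : csr_S A = mpmx2 None (Some b) (Some c) None.
Proof. by rewrite [LHS]mpmx2E /csr_S !(negbTE (Hloop _)) H01 H10 Hb Hc. Qed.

Lemma csr_N2 : csr_N A = cyc false 0.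
Proof.
rewrite /csr_N; have -> : mp_normalize A = mpmx2 (mpmul a (Some (- l))) (Some (b - l)) (Some (c - l))
                                 (mpmul d (Some (- l))).
  by rewrite [LHS]mpmx2E /mp_normalize Hl Hb Hc; case: a => [?|]; case: d => [?|].
by rewrite crit_cyclicity2 // (mpmxpow2_normalized Hbc (diag_le_mcm _) (diag_le_mcm _)).
Qed.

Lemma csr_M2 : csr_M A = cyc false 0.
Proof.
apply: functional_extensionality => i; apply: functional_extensionality => j.
rewrite /csr_M !big_ord_recl big_ord0 mpadd_minfr.
rewrite mpmxpow1 csr_N2 /cyc_power /mpmx2 /mpI.
by case: (ord2P i) => ->; case: (ord2P j) => -> //=; rewrite maxxx.
Qed.

Lemma csr_B2 : csr_B A = mpmx2 None None None None.
Proof. by rewrite [LHS]mpmx2E /csr_B !crit_node2. Qed.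

Lemma CSR2 t : CSR A t = cyc (odd t) (t%:R * l).
Proof.
have HC : csr_C A = csr_M A.
  by apply: functional_extensionality => i; apply: functional_extensionality => j;
    rewrite /csr_C crit_node2.
have HR : csr_R A = csr_M A.
  by apply: functional_extensionality => i; apply: functional_extensionality => j;
    rewrite /csr_R crit_node2.
by rewrite /CSR HC HR csr_M2 csr_S2 (mpmxpow_S2 Hbc) (cyc_power_sandwich Hbc (diag_le_mcm _) (diag_le_mcm _)).
Qed.

Lemma csr_holds_at2E t : csr_holds_at A t.+1 <-> mpmxpow A t.+1 = cyc (~~ odd t) (t.+1%:R * l).
Proof. by rewrite /csr_holds_at csr_B2 mpmxpow_minf mpmxadd_minfr CSR2. Qed.

Lemma csr_holds_at_ge2 t : (2 <= t)%N -> csr_holds_at A t.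
Proof.
case: t => [|[|t]] // _; apply/csr_holds_at2E.
by rewrite [in LHS]mpmx2_A (mpmxpow_A2 Hbc (diag_le_mcm _) (diag_le_mcm _)) negbK.
Qed.

Lemma csr_holds_at1E : csr_holds_at A 1 <-> a = d.
Proof.
rewrite csr_holds_at2E mpmxpow1 {1}mpmx2_A /cyc_power /= mul1r subrr mpmul1r !addrK.
split => [E | ->]; last by rewrite mpaddxx.
have Ea := congr1 (fun M : mpmx R 2 => M ord0 ord0) E.
have Ed := congr1 (fun M : mpmx R 2 => M ord_max ord_max) E.
exact: etrans Ea (esym Ed).
Qed.

End CSRTwoCycle.

Lemma is_T1_succE (R : realFieldType) n (A : mpmx R n) T :
  (forall t, (T < t)%N -> csr_holds_at A t) -> is_T1 A T.+1 <-> ~ csr_holds_at A T.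
Proof.
move=> Hgt; split => [[_ Hmin] HT | HT].
  suff : (T < T)%N by rewrite ltnn.
  by apply: Hmin => t; rewrite leq_eqVlt => /orP [/eqP <- // | /Hgt].
split=> // T' HT'; rewrite ltnNge; apply/negP => HT'T.
exact/HT/HT'.
Qed.

Theorem propositionp (R : realFieldType) (A : mpmx R 2) :
  mcm A != None ->
  crit_girth A = 2%N ->
  (is_T1 A (DM 2 2) /\ DM 2 2 = 2%N) <-> A ord0 ord0 != A ord_max ord_max.
Proof.
move=> Hl0 Hg; case Hl: (mcm A) Hl0 => [l|] // _.
have [H01 H10 Hloop] := crit_girth2_2cycle Hg.
have [b [c [Hb Hc Hbc]]] := crit_arc01_weights Hl H01.
have Hge2 := csr_holds_at_ge2 Hl Hb Hc Hbc H01 H10 Hloop.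
have H1 := csr_holds_at1E Hl Hb Hc Hbc H01 H10 Hloop.
rewrite /DM /= (is_T1_succE Hge2) H1.
by split => [[/eqP] | /eqP].
Qed.
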